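(* Let $v\in\mathbb{N}$ and let $S,S'\subset\mathbb{N}_0$ be finite sets of consecutive integers with $S'>S$ and $d(S,S')=1$. (a) $S$ is down-admissible for $v$ and $S'$ is down-admissible for $v[S]$ if and only if $S'$ is down-admissible for $v$ and $S$ is up-admissible for $v[S']$. In this case $v[S][S']=v[S'](S)$. (b) $S'$ is up-admissible for $v$ and $S$ is up-admissible for $v(S')$ if and only if $S$ is down-admissible for $v$ and $S'$ is up-admissible for $v[S]$. In this case $v(S')(S)=v[S](S')$.
   Context: Fix a prime $p$; $\mathbb{N}=\{1,2,\dots\}$, $\mathbb{N}_0=\mathbb{N}\cup\{0\}$. For $v\in\mathbb{N}$ write $v=\sum_{i=0}^{j}a_ip^i$ with $0\le a_i\le p-1$, $a_j\ne0$, and $a_i=0$ for $i>j$ (the digits of $v$). A finite $S\subset\mathbb{N}_0$ splits uniquely into maximal subsets of consecutive integers (blocks). $S$ is down-admissible for $v$ if (d1) $a_{\min B}\ne0$ for every block $B$ of $S$ and (d2) $s\in S$, $a_{s+1}=0$ imply $s+1\in S$; then $v[S]:=\sum_i\epsilon_ia_ip^i$ with $\epsilon_i=-1$ for $i\in S$ and $\epsilon_i=1$ otherwise. $S$ is up-admissible for $v$ if (u1) $a_{\min B}\ne0$ for every block $B$ of $S$ and (u2) $s\in S$, $a_{s+1}=p-1$ imply $s+1\in S$; then $v(S):=\sum_ka'_kp^k$ with $a'_k=-a_k$ for $k\in S$, $a'_k=a_k+2$ for $k\notin S$, $k-1\in S$, and $a'_k=a_k$ otherwise. Admissibility for $v[S]$,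 $v(S)$ etc. refers to the $p$-adic digits of these numbers. $d(A,B)=\min\{|a-b|:a\in A,b\in B\}$; $S'>S$ means every element of $S'$ exceeds every element of $S$. *)

From HB Require Import structures.
From mathcomp Require Import all_boot all_order all_algebra.
From mathcomp Require Import finmap.
Set Implicit Arguments. Unset Strict Implicit. Unset Printing Implicit Defensive.
Import Order.TTheory GRing.Theory Num.Theory.
Local Open Scope fset_scope.

(* i-th p-adic digit of an integer w (used for w > 0; for w >= 1 these are
   exactly the digits a_i of the paper, with a_i = 0 beyond the top digit). *)
Definition digit (p : nat) (w : int) (i : nat) : nat :=
  ((absz w %/ p ^ i) %% p)%N.

Definition block_min (S : {fset nat}) (i : nat) : bool :=
  (i \in S) && ((i == 0%N) || (i.-1 \notin S)).

Definition down_adm (p : nat) (w : int) (S : {fset nat}) : Prop :=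
  (forall i, block_min S i -> digit p w i != 0%N) /\
  (forall s, s \in S -> digit p w s.+1 = 0%N -> s.+1 \in S).

Definition up_adm (p : nat) (w : int) (S : {fset nat}) : Prop :=
  (forall i, block_min S i -> digit p w i != 0%N) /\
  (forall s, s \in S -> digit p w s.+1 = p.-1 -> s.+1 \in S).

(* a range of indices large enough to contain every index where the digits
   of w, or the modified digits, can be nonzero *)
Definition bound (w : int) (S : {fset nat}) : nat :=
  (absz w + \max_(i <- S) i + 2)%N.

Local Open Scope ring_scope.

Definition vdown (p : nat) (w : int) (S : {fset nat}) : int :=
  \sum_(i < bound w S)
     (if (i : nat) \in S then -1 else 1) * (digit p w i)%:Z * (p ^ i)%:Z.

Definition updigit (p : nat) (w : int) (S : {fset nat}) (k : nat) : int :=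
  if k \in S then - (digit p w k)%:Z
  else if (0 < k)%N && (k.-1 \in S) then (digit p w k)%:Z + 2
  else (digit p w k)%:Z.

Definition vup (p : nat) (w : int) (S : {fset nat}) : int :=
  \sum_(k < bound w S) updigit p w S k * (p ^ k)%:Z.

Definition consecutive (S : {fset nat}) : Prop :=
  forall i j k, i \in S -> k \in S -> (i <= j <= k)%N -> j \in S.

Definition fset_gt (S' S : {fset nat}) : Prop :=
  forall a b, a \in S -> b \in S' -> (a < b)%N.

Definition dist_one (S S' : {fset nat}) : Prop :=
  (exists a b, [/\ a \in S, b \in S' & `|(a%:Z - b%:Z)| = 1]) /\
  (forall a b, a \in S -> b \in S' -> 1 <= `|(a%:Z - b%:Z)|).

From HB Require Import structures.
From mathcomp Require Import all_boot all_order all_algebra.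
From mathcomp Require Import finmap.
From mathcomp Require Import zify ring.
Import Order.TTheory GRing.Theory Num.Theory.

Set Implicit Arguments.
Unset Strict Implicit.
Unset Printing Implicit Defensive.

(* For a block S = [s, m] of consecutive indices, v[S] = v - 2 (v mod p^(m+1) - v mod p^s)
   and v(S) = v[S] + 2 p^(m+1), while down- (resp. up-) admissibility of S only asks
   a_s != 0 and a_(m+1) != 0 (resp. a_(m+1) != p - 1).  When a_s != 0, v[S] and v(S) are
   obtained from v by complementing the digits of the block, a_s becoming p - a_s, and by
   lowering (resp. raising) a_(m+1) by one; no other digit moves.  For S = [s, a] and
   S' = [a+1, M] each of the four conjunctions of the statement thus reduces to
   a_s != 0, a_(a+1) >= 2 and a_(M+1) != 0 in (a), resp. a_(M+1) != p - 1 in (b), and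
   the two sides of the identity in (a) both equal
   v - 2 (v mod p^(M+1) - v mod p^s) + 2 p^(a+1), those of (b) this plus 2 p^(M+1). *)

Section Digits.
Variable p : nat.

Lemma digit_nat (w i : nat) : digit p w i = w %/ p ^ i %% p.
Proof. by []. Qed.

Lemma modn_expS (w k : nat) : w %% p ^ k.+1 = w %% p ^ k + digit p w k * p ^ k.
Proof.
rewrite digit_nat modn_divl -expnS {1}(divn_eq (w %% p ^ k.+1) (p ^ k)) addnC.
by rewrite (modn_dvdm _ (dvdn_exp2l p (leqnSn k))).
Qed.

Lemma sum_digits (w k : nat) :
  (\sum_(i < k) (digit p w i * p ^ i)%N%:Z = (w %% p ^ k)%N%:Z)%R.
Proof.
elim: k => [|k IHk]; first by rewrite big_ord0 expn0 modn1.
by rewrite big_ord_recr /= IHk modn_expS PoszD.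
Qed.

Lemma divn_exp_ge (x y k K : nat) : x %/ p ^ k = y %/ p ^ k -> k <= K ->
  x %/ p ^ K = y %/ p ^ K.
Proof.
move=> exy /subnKC <-.
by rewrite expnD divnMA exy -divnMA.
Qed.

Lemma digit_eq_high (x y k i : nat) : x %/ p ^ k = y %/ p ^ k -> k <= i ->
  digit p x i = digit p y i.
Proof. by move=> exy ki; rewrite !digit_nat (divn_exp_ge exy ki). Qed.

Lemma digit_eq_low (x y k i : nat) : x %% p ^ k = y %% p ^ k -> i < k ->
  digit p x i = digit p y i.
Proof.
move=> exy ik; have dvd_pk := dvdn_exp2l p ik.
rewrite !digit_nat !modn_divl -expnS.
by rewrite -(modn_dvdm x dvd_pk) -(modn_dvdm y dvd_pk) exy.
Qed.

Lemma predD_divn_eq (q c : nat) : 0 < q %% p + c ->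
  (q + c).-1 = q %/ p * p + (q %% p + c).-1.
Proof.
move=> qc_gt0; rewrite {1}(divn_eq q p) -addnA.
by move: qc_gt0; case: (_ + c) => // n _; rewrite addnS.
Qed.

End Digits.

Lemma ltn_subMD (K x P l : nat) : 0 < x -> x <= K -> l < P -> (K - x) * P + l < K * P.
Proof.
move=> x_gt0 x_le_K l_lt_P; apply: (@leq_trans ((K - x).+1 * P)).
  by rewrite mulSn [P + _]addnC ltn_add2l.
by rewrite leq_mul2r; apply/orP; right; lia.
Qed.

(* w - 2 (w mod p^(m+1) - w mod p^s) + c p^(m+1) written as a natural number: it is
   w[S] for c = 0 and w(S) for c = 2 when S = [s, m].  Both truncated subtractions are
   exact as soon as a_s != 0 and a_(m+1) + c > 0. *)
Definition flip_block (p s m c w : nat) : nat :=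
  (w %/ p ^ m.+1 + c).-1 * p ^ m.+1
  + ((p ^ (m.+1 - s) - w %% p ^ m.+1 %/ p ^ s) * p ^ s + w %% p ^ s).

Section Flip.
Variables (p s m c w : nat).
Hypothesis p_gt1 : 1 < p.
Hypothesis s_le_m : s <= m.

Let p_gt0 : 0 < p. Proof. exact: ltnW. Qed.
Let expp_gt0 k : 0 < p ^ k. Proof. by rewrite expn_gt0 p_gt0. Qed.
Let dvdn_block : p %| p ^ (m.+1 - s). Proof. by rewrite dvdn_exp // subn_gt0 ltnS. Qed.

Lemma expn_block : p ^ m.+1 = p ^ (m.+1 - s) * p ^ s.
Proof. by rewrite -expnD subnK // leqW. Qed.

Lemma modn_block : w %% p ^ m.+1 = w %% p ^ m.+1 %/ p ^ s * p ^ s + w %% p ^ s.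
Proof.
by rewrite {1}(divn_eq (w %% p ^ m.+1) (p ^ s)) (modn_dvdm _ (dvdn_exp2l p (leqW s_le_m))).
Qed.

Lemma block_lt : w %% p ^ m.+1 %/ p ^ s < p ^ (m.+1 - s).
Proof. by rewrite ltn_divLR ?expp_gt0 // -expn_block ltn_pmod ?expp_gt0. Qed.

Lemma block_modp : w %% p ^ m.+1 %/ p ^ s %% p = digit p w s.
Proof.
rewrite divn_modl ?dvdn_exp2l ?leqW // -expnB ?leqW //.
by rewrite (modn_dvdm _ dvdn_block).
Qed.

Lemma flip_blockE : 0 < w %/ p ^ m.+1 + c ->
  ((flip_block p s m c w)%:Z
    = w%:Z - 2 * ((w %% p ^ m.+1)%N%:Z - (w %% p ^ s)%N%:Z) + (c * p ^ m.+1)%N%:Z)%R.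
Proof.
move: block_lt modn_block (divn_eq w (p ^ m.+1)).
rewrite /flip_block expn_block.
set q := w %/ _; set x := _ %/ p ^ s; set l := w %% p ^ s; set r := w %% _.
set K := p ^ _; set P := p ^ s.
move=> x_lt_K r_eq w_eq qc_gt0; rewrite {1}w_eq r_eq; clearbody q x l r K P.
nia.
Qed.

Lemma flip_block_modn_low j : j <= s -> flip_block p s m c w %% p ^ j = w %% p ^ j.
Proof.
move=> j_le_s; have dvd_js := dvdn_exp2l p j_le_s.
have dvd_high : p ^ j %| (w %/ p ^ m.+1 + c).-1 * p ^ m.+1
    + (p ^ (m.+1 - s) - w %% p ^ m.+1 %/ p ^ s) * p ^ s.
  by rewrite dvdn_add ?dvdn_mull // (dvdn_trans dvd_js) ?dvdn_exp2l ?leqW.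
by rewrite /flip_block addnA -modnDml (eqP dvd_high) add0n (modn_dvdm _ dvd_js).
Qed.

Hypothesis digit_s_neq0 : digit p w s != 0.

Lemma flip_block_low_lt :
  (p ^ (m.+1 - s) - w %% p ^ m.+1 %/ p ^ s) * p ^ s + w %% p ^ s < p ^ m.+1.
Proof.
have x_gt0 : 0 < w %% p ^ m.+1 %/ p ^ s.
  by rewrite lt0n; apply: contra digit_s_neq0 => /eqP x0; rewrite -block_modp x0 mod0n.
by rewrite [X in _ < X]expn_block ltn_subMD ?ltn_pmod ?expp_gt0 // ltnW ?block_lt.
Qed.

Lemma flip_block_divn : flip_block p s m c w %/ p ^ m.+1 = (w %/ p ^ m.+1 + c).-1.
Proof.
by rewrite /flip_block divnMDl ?expp_gt0 // (divn_small flip_block_low_lt) addn0.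
Qed.

Lemma flip_block_modn :
  flip_block p s m c w %% p ^ m.+1 + w %% p ^ m.+1 = p ^ m.+1 + 2 * (w %% p ^ s).
Proof.
rewrite /flip_block modnMDl modn_small ?flip_block_low_lt //.
move: (ltnW block_lt) modn_block.
set x := w %% p ^ m.+1 %/ p ^ s; set r := w %% p ^ m.+1; rewrite [p ^ m.+1]expn_block.
clearbody x r => x_le r_eq; rewrite r_eq addnACA -mulnDl subnK //; lia.
Qed.

Lemma digit_flip_block_s : digit p (flip_block p s m c w) s = p - digit p w s.
Proof.
rewrite digit_nat /flip_block -block_modp.
set X := (_ + c).-1; set x := w %% p ^ m.+1 %/ p ^ s; set l := w %% p ^ s.
rewrite expn_block mulnA addnA -mulnDl divnMDl // (divn_small (ltn_pmod _ _)) // addn0.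
rewrite -modnDml (eqP (dvdn_mull X dvdn_block)) add0n modnB // ?(ltnW block_lt) //.
by rewrite (eqP dvdn_block) block_modp lt0n digit_s_neq0 mul1n addn0.
Qed.

Hypothesis digit_top_bounds : 0 < digit p w m.+1 + c <= p.

Let top_lt : (digit p w m.+1 + c).-1 < p.
Proof. by case/andP: digit_top_bounds; lia. Qed.

Let divn_top : (w %/ p ^ m.+1 + c).-1 = w %/ p ^ m.+2 * p + (digit p w m.+1 + c).-1.
Proof.
case/andP: digit_top_bounds => qc_gt0 _.
by rewrite (@predD_divn_eq p (w %/ p ^ m.+1) c qc_gt0) [in RHS]expnSr divnMA.
Qed.

Lemma digit_flip_block_top :
  digit p (flip_block p s m c w) m.+1 = (digit p w m.+1 + c).-1.
Proof. by rewrite digit_nat flip_block_divn divn_top modnMDl modn_small. Qed.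

Lemma flip_block_divn_high : flip_block p s m c w %/ p ^ m.+2 = w %/ p ^ m.+2.
Proof.
rewrite [in LHS]expnSr divnMA flip_block_divn divn_top divnMDl //.
by rewrite (divn_small top_lt) addn0.
Qed.

End Flip.

Local Open Scope ring_scope.

Lemma modn_subz (x y d : nat) : (x %/ d = y %/ d)%N ->
  (x %% d)%N%:Z - (y %% d)%N%:Z = x%:Z - y%:Z.
Proof.
move=> exy; rewrite [in RHS](divn_eq x d) [in RHS](divn_eq y d) exy !PoszD.
by rewrite opprD addrACA subrr add0r.
Qed.

Section Signed.
Variable p : nat.

Lemma sum_digits_range (w s t N : nat) : (s <= t.+1)%N -> (t < N)%N ->
  \sum_(i < N | (s <= i <= t)%N) (digit p w i * p ^ i)%N%:Z
    = (w %% p ^ t.+1)%N%:Z - (w %% p ^ s)%N%:Z.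
Proof.
move=> st tN; set F := fun i : nat => (digit p w i * p ^ i)%N%:Z.
rewrite -!sum_digits !(big_ord_widen N F) ?(leq_trans st) //.
rewrite big_mkcond [X in _ = X - _]big_mkcond [X in _ = _ - X]big_mkcond -sumrB.
apply: eq_bigr => i _; rewrite ltnS.
case: (leqP s i) => si; case: (leqP i t) => it /=;
  rewrite ?subr0 ?subrr //; lia.
Qed.

Lemma vup_vdown (w : int) (S : {fset nat}) :
  vup p w S = vdown p w S +
    2 * \sum_(k < bound w S | ((k : nat) \notin S) && (0 < k)%N && (k.-1 \in S))
          (p ^ k)%N%:Z.
Proof.
rewrite /vup /vdown mulr_sumr [X in _ = _ + X]big_mkcond -big_split /=.
apply: eq_bigr => k _; rewrite /updigit.
by case: ((k : nat) \in S) => /=; [|case: (_ && _)]; rewrite /= ?addr0; ring.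
Qed.

Hypothesis p_gt1 : (1 < p)%N.

Lemma vdownE (w : nat) (S : {fset nat}) :
  vdown p w S
    = w%:Z - 2 * \sum_(i < bound w S | (i : nat) \in S) (digit p w i * p ^ i)%N%:Z.
Proof.
have w_lt : (w < p ^ bound w S)%N.
  by apply: leq_trans (ltn_expl _ p_gt1); rewrite /bound absz_nat; lia.
rewrite /vdown; set N := bound w S in w_lt *.
have wE : w%:Z = \sum_(i < N) (digit p w i * p ^ i)%N%:Z.
  by rewrite sum_digits modn_small.
rewrite [X in _ = X - _]wE mulr_sumr [X in _ = _ - X]big_mkcond -sumrB.
apply: eq_bigr => i _; rewrite PoszM.
by case: ((i : nat) \in S); rewrite /= ?subr0; ring.
Qed.

End Signed.

Section Block.
Variables (p : nat) (S : {fset nat}) (s m : nat).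
Hypothesis mem_block : forall i, (i \in S) = (s <= i <= m)%N.
Hypothesis s_le_m : (s <= m)%N.

Lemma block_minE i : block_min S i = (i == s).
Proof. by rewrite /block_min !mem_block; case: i => [|i] /=; lia. Qed.

Lemma block_adm (d : nat -> nat) (z : nat) :
  (forall i, block_min S i -> d i != 0%N) /\
  (forall t, t \in S -> d t.+1 = z -> t.+1 \in S) <->
  d s != 0%N /\ d m.+1 != z.
Proof.
split=> [[d1 d2] | [ds dm]]; split.
- by apply: d1; rewrite block_minE.
- apply/eqP => dmz; have m_in : m \in S by rewrite mem_block leqnn s_le_m.
  by have := d2 m m_in dmz; rewrite mem_block ltnn andbF.
- by move=> i; rewrite block_minE => /eqP ->.
- move=> t; rewrite !mem_block => /andP[st tm] dz.
  have [t_lt_m | t_ge_m] := ltnP t m; first by lia.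
  have t_eq_m : t = m by lia.
  by rewrite -t_eq_m dz eqxx in dm.
Qed.

Lemma down_adm_block (w : int) :
  down_adm p w S <-> digit p w s != 0%N /\ digit p w m.+1 != 0%N.
Proof. exact: block_adm. Qed.

Lemma up_adm_block (w : int) :
  up_adm p w S <-> digit p w s != 0%N /\ digit p w m.+1 != p.-1.
Proof. exact: block_adm. Qed.

Lemma block_lt_bound (w : int) : (m.+1 < bound w S)%N.
Proof.
have m_le_max : (m <= \max_(i <- S) i)%N.
  by apply: (@leq_bigmax_seq _ _ xpredT id) => //; rewrite mem_block leqnn s_le_m.
by rewrite /bound; lia.
Qed.

Lemma vup_block (w : int) : vup p w S = vdown p w S + 2 * (p ^ m.+1)%N%:Z.
Proof.
rewrite vup_vdown (eq_bigl (fun k : 'I_(bound w S) => (k : nat) == m.+1)).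
  by rewrite (big_ord1_eq _ (fun k => (p ^ k)%N%:Z)) block_lt_bound.
move=> k; rewrite !mem_block; lia.
Qed.

Hypothesis p_gt1 : (1 < p)%N.

Lemma vdown_block (w : nat) :
  vdown p w S = w%:Z - 2 * ((w %% p ^ m.+1)%N%:Z - (w %% p ^ s)%N%:Z).
Proof.
rewrite vdownE // -(sum_digits_range p w (leqW s_le_m) (ltnW (block_lt_bound w))).
by congr (_ - 2 * _); apply: eq_bigl => i; rewrite mem_block.
Qed.

Lemma vdown_flip (w : nat) :
  digit p w m.+1 != 0%N -> vdown p w S = flip_block p s m 0 w.
Proof.
move=> top_neq0; have q_gt0 : (0 < w %/ p ^ m.+1 + 0)%N.
  by rewrite addn0 lt0n; apply: contra top_neq0 => /eqP q0; rewrite digit_nat q0 mod0n.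
by rewrite flip_blockE // mul0n addr0 vdown_block.
Qed.

Lemma vup_flip (w : nat) : vup p w S = flip_block p s m 2 w.
Proof. by rewrite flip_blockE ?addn2 // PoszM vup_block vdown_block. Qed.

End Block.

Section Adjacent.
Variables (p s a M : nat) (S S' : {fset nat}) (v : nat).
Hypothesis p_gt1 : (1 < p)%N.
Hypothesis mem_S : forall i, (i \in S) = (s <= i <= a)%N.
Hypothesis mem_S' : forall i, (i \in S') = (a < i <= M)%N.
Hypothesis s_le_a : (s <= a)%N.
Hypothesis a_lt_M : (a < M)%N.

Local Notation A := (digit p v s).
Local Notation B := (digit p v a.+1).
Local Notation C := (digit p v M.+1).

Let digit_lt i (w : nat) : (digit p w i < p)%N.
Proof. by rewrite ltn_pmod // ltnW. Qed.

Let down_S w := down_adm_block p mem_S s_le_a w.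
Let up_S w := up_adm_block p mem_S s_le_a w.
Let down_S' w := down_adm_block p mem_S' a_lt_M w.
Let up_S' w := up_adm_block p mem_S' a_lt_M w.

Lemma digits_flip_left : A != 0%N -> B != 0%N ->
  digit p (flip_block p s a 0 v) a.+1 = B.-1 /\
  digit p (flip_block p s a 0 v) M.+1 = C.
Proof.
move=> A_neq0 B_neq0; have B_bounds : (0 < B + 0 <= p)%N.
  by rewrite addn0 lt0n B_neq0 ltnW ?digit_lt.
split; first by rewrite digit_flip_block_top // addn0.
by apply: (digit_eq_high (k := a.+2)); rewrite ?flip_block_divn_high.
Qed.

Lemma digits_flip_right c : B != 0%N ->
  digit p (flip_block p a.+1 M c v) s = A /\
  digit p (flip_block p a.+1 M c v) a.+1 = (p - B)%N.
Proof.
move=> B_neq0; split; last exact: digit_flip_block_s.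
by apply: (digit_eq_low (k := a.+1)); rewrite ?flip_block_modn_low ?ltnS.
Qed.

Let vdown_S := vdown_flip mem_S s_le_a p_gt1.
Let vdown_S' := vdown_flip mem_S' a_lt_M p_gt1.
Let vup_S' := vup_flip mem_S' a_lt_M p_gt1.

Lemma vdown_vdownE : A != 0%N -> B != 0%N ->
  vdown p (vdown p v S) S'
    = v%:Z - 2 * ((v %% p ^ M.+1)%N%:Z - (v %% p ^ s)%N%:Z) + 2 * (p ^ a.+1)%N%:Z.
Proof.
move=> A_neq0 B_neq0; have B_bounds : (0 < B + 0 <= p)%N.
  by rewrite addn0 lt0n B_neq0 ltnW ?digit_lt.
have flipE := vdown_block mem_S s_le_a p_gt1 v; rewrite vdown_S // in flipE *.
have top_eq : (flip_block p s a 0 v %/ p ^ M.+1 = v %/ p ^ M.+1)%N.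
  exact: divn_exp_ge (flip_block_divn_high _ _ _ _) _.
have := modn_subz top_eq; have := flip_block_modn 0 p_gt1 s_le_a A_neq0.
rewrite (vdown_block mem_S' a_lt_M p_gt1); lia.
Qed.

Lemma vdown_flip_right c :
  vdown p (flip_block p a.+1 M c v) S
    = (flip_block p a.+1 M c v)%:Z - 2 * ((v %% p ^ a.+1)%N%:Z - (v %% p ^ s)%N%:Z).
Proof.
by rewrite (vdown_block mem_S s_le_a p_gt1) !flip_block_modn_low // leqW.
Qed.

Lemma adm_downL_downR :
  down_adm p v S /\ down_adm p (vdown p v S) S' <-> [/\ A != 0%N, (1 < B)%N & C != 0%N].
Proof.
split=> [[/down_S[A_neq0 B_neq0]] | [A_neq0 B_gt1 C_neq0]].
  have [B1 C1] := digits_flip_left A_neq0 B_neq0.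
  by rewrite vdown_S // => /down_S'; rewrite B1 C1 => -[B1_neq0 C_neq0]; split=> //; lia.
have B_neq0 : B != 0%N by lia.
have [B1 C1] := digits_flip_left A_neq0 B_neq0.
split; first exact/down_S.
by rewrite vdown_S //; apply/down_S'; rewrite B1 C1; split=> //; lia.
Qed.

Lemma adm_downR_upL :
  down_adm p v S' /\ up_adm p (vdown p v S') S <-> [/\ A != 0%N, (1 < B)%N & C != 0%N].
Proof.
have := digit_lt a.+1 v.
split=> [[/down_S'[B_neq0 C_neq0]] | [A_neq0 B_gt1 C_neq0]].
  have [As Bs] := digits_flip_right 0 B_neq0.
  by rewrite vdown_S' // => /up_S; rewrite As Bs => -[A_neq0 pB]; split=> //; lia.
have B_neq0 : B != 0%N by lia.
have [As Bs] := digits_flip_right 0 B_neq0.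
split; first exact/down_S'.
by rewrite vdown_S' //; apply/up_S; rewrite As Bs; split=> //; lia.
Qed.

Lemma adm_upR_upL :
  up_adm p v S' /\ up_adm p (vup p v S') S <-> [/\ A != 0%N, (1 < B)%N & C != p.-1].
Proof.
have := digit_lt a.+1 v.
split=> [[/up_S'[B_neq0 C_top]] | [A_neq0 B_gt1 C_top]].
  have [As Bs] := digits_flip_right 2 B_neq0.
  by rewrite vup_S' => /up_S; rewrite As Bs => -[A_neq0 pB]; split=> //; lia.
have B_neq0 : B != 0%N by lia.
have [As Bs] := digits_flip_right 2 B_neq0.
split; first exact/up_S'.
by rewrite vup_S'; apply/up_S; rewrite As Bs; split=> //; lia.
Qed.

Lemma adm_downL_upR :
  down_adm p v S /\ up_adm p (vdown p v S) S' <-> [/\ A != 0%N, (1 < B)%N & C != p.-1].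
Proof.
split=> [[/down_S[A_neq0 B_neq0]] | [A_neq0 B_gt1 C_top]].
  have [B1 C1] := digits_flip_left A_neq0 B_neq0.
  by rewrite vdown_S // => /up_S'; rewrite B1 C1 => -[B1_neq0 C_top]; split=> //; lia.
have B_neq0 : B != 0%N by lia.
have [B1 C1] := digits_flip_left A_neq0 B_neq0.
split; first exact/down_S.
by rewrite vdown_S //; apply/up_S'; rewrite B1 C1; split=> //; lia.
Qed.

Lemma vdown_vdown_swap : A != 0%N -> B != 0%N -> C != 0%N ->
  vdown p (vdown p v S) S' = vup p (vdown p v S') S.
Proof.
move=> A_neq0 B_neq0 C_neq0.
rewrite vdown_vdownE // vdown_S' // (vup_block p mem_S s_le_a).
rewrite vdown_flip_right // -vdown_S' // (vdown_block mem_S' a_lt_M p_gt1); lia.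
Qed.

Lemma vup_vup_swap : A != 0%N -> B != 0%N ->
  vup p (vup p v S') S = vup p (vdown p v S) S'.
Proof.
move=> A_neq0 B_neq0.
rewrite vup_S' (vup_block p mem_S s_le_a) vdown_flip_right // flip_blockE ?addn2 //.
by rewrite (vup_block p mem_S' a_lt_M) vdown_vdownE //; lia.
Qed.

End Adjacent.

Lemma consecutive_interval (S : {fset nat}) (i : nat) : consecutive S -> i \in S ->
  exists s m, [/\ (s <= i <= m)%N & forall j, (j \in S) = (s <= j <= m)%N].
Proof.
move=> consS iS; have exS : exists j, j \in S by exists i.
have ubS j : j \in S -> (j <= \max_(k <- S) k)%N.
  by move=> jS; apply: (@leq_bigmax_seq _ _ xpredT id).
case: (ex_minnP exS) => s sS s_min; case: (ex_maxnP exS ubS) => m mS m_max.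
exists s, m; split; first by rewrite s_min ?m_max.
move=> j; apply/idP/idP => [jS | /(consS s j m sS mS)//].
by rewrite s_min ?m_max.
Qed.

Lemma adjacent_blocks (S S' : {fset nat}) :
  consecutive S -> consecutive S' -> fset_gt S' S -> dist_one S S' ->
  exists s a M, [/\ (s <= a < M)%N, forall i, (i \in S) = (s <= i <= a)%N
                  & forall i, (i \in S') = (a < i <= M)%N].
Proof.
move=> consS consS' gtS'S [[a [b [aS bS' ab1]]] _].
have b_eq : b = a.+1 by have := gtS'S a b aS bS'; lia.
subst b; have [s [m [/andP[s_le_a a_le_m] mem_S]]] := consecutive_interval consS aS.
have [s' [M [/andP[s'_le a_lt_M] mem_S']]] := consecutive_interval consS' bS'.
have m_eq : m = a.
  have := gtS'S m a.+1.
  by rewrite mem_S mem_S' s'_le a_lt_M leqnn (leq_trans s_le_a) //; lia.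
have s'_eq : s' = a.+1.
  by have := gtS'S a s'; rewrite mem_S mem_S' s_le_a leqnn (leq_trans s'_le) //; lia.
subst m s'; exists s, a, M; split=> //; exact/andP.
Qed.

Local Open Scope fset_scope.
Local Open Scope ring_scope.

Theorem lemma2p13 (p : nat) (v : nat) (S S' : {fset nat}) :
  prime p -> (1 <= v)%N ->
  consecutive S -> consecutive S' -> fset_gt S' S -> dist_one S S' ->
  (* (a) *)
  ((down_adm p v%:Z S /\ down_adm p (vdown p v%:Z S) S') <->
   (down_adm p v%:Z S' /\ up_adm p (vdown p v%:Z S') S)) /\
  (down_adm p v%:Z S /\ down_adm p (vdown p v%:Z S) S' ->
   vdown p (vdown p v%:Z S) S' = vup p (vdown p v%:Z S') S) /\
  (* (b) *)
  ((up_adm p v%:Z S' /\ up_adm p (vup p v%:Z S') S) <->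
   (down_adm p v%:Z S /\ up_adm p (vdown p v%:Z S) S')) /\
  (up_adm p v%:Z S' /\ up_adm p (vup p v%:Z S') S ->
   vup p (vup p v%:Z S') S = vup p (vdown p v%:Z S) S').
Proof.
move=> /prime_gt1 p_gt1 _ consS consS' gtS'S dist1.
have [s [a [M [/andP[s_le_a a_lt_M] mem_S mem_S']]]] :=
  adjacent_blocks consS consS' gtS'S dist1.
have down_left := adm_downL_downR v p_gt1 mem_S mem_S' s_le_a a_lt_M.
have down_right := adm_downR_upL v p_gt1 mem_S mem_S' s_le_a a_lt_M.
have up_right := adm_upR_upL v p_gt1 mem_S mem_S' s_le_a a_lt_M.
have up_left := adm_downL_upR v p_gt1 mem_S mem_S' s_le_a a_lt_M.
split; [|split; [|split]].
- exact: iff_trans down_left (iff_sym down_right).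
- by case/down_left=> A_neq0 B_gt1 C_neq0; apply: vdown_vdown_swap => //; lia.
- exact: iff_trans up_right (iff_sym up_left).
- by case/up_right=> A_neq0 B_gt1 _; apply: vup_vup_swap => //; lia.
Qed.
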